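(* For every positive integer $n$, $$\sum_{k=1}^n(2k+1)M_k^2=\sum_{k=0}^{n+1}\frac{(4n-2k+3)(n+k+2)}{n+2}\binom{n+k+1}{2k}\binom{2k}{k}\binom{2k+1}{k}(-3)^{n+1-k}.$$
   Context: $M_n=\sum_{k=0}^{\lfloor n/2\rfloor}\binom{n}{2k}\frac{1}{k+1}\binom{2k}{k}$ is the $n$-th Motzkin number. *)

From mathcomp Require Import all_boot all_algebra.
Set Implicit Arguments. Unset Strict Implicit. Unset Printing Implicit Defensive.
Import GRing.Theory Num.Theory.
Local Open Scope ring_scope.

Definition motzkin (n : nat) : rat :=
  \sum_(0 <= k < (n./2).+1)
     ('C(n, 2 * k))%:R * ((k.+1)%:R)^-1 * ('C(2 * k, k))%:R.

(* Both sides are identified through the closed form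
     sum_{k=1}^n (2k+1) M_k^2 = Q_n  (motzkin_sqr_sum n),
   a quadratic form in M_n and M_{n+1} that telescopes by the recurrence
   (n+4) M_{n+2} = (2n+5) M_{n+1} + 3(n+1) M_n, itself obtained by creative
   telescoping.  Zeilberger's algorithm gives a third-order recurrence with
   polynomial coefficients, and an explicit certificate, for (n+2) times the
   right-hand side (binsum n).  The Motzkin recurrence shows that (n+2) Q_n
   satisfies the same recurrence; its leading coefficient never vanishes and
   the two sequences agree for n = 0, 1, 2. *)

From mathcomp Require Import all_boot all_algebra.
From mathcomp Require Import ring zify.

Set Implicit Arguments.
Unset Strict Implicit.
Unset Printing Implicit Defensive.

Import GRing.Theory Num.Theory.
Local Open Scope ring_scope.

Ltac natr_neq0 := rewrite -[1]/(1%:R) -?natrM -?natrD ?pnatr_eq0; lia.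

Section BinomialRatios.
Context {R : numFieldType}.

Lemma natr_bin_pred (m j : nat) :
  'C(m, j)%:R = 'C(m.+1, j)%:R * (m.+1%:R - j%:R) / m.+1%:R :> R.
Proof.
have [le_jm1|lt_m1j] := leqP j m.+1; last by rewrite !bin_small ?mul0r //; lia.
have := congr1 (GRing.natmul (1 : R)) (mul_bin_down m.+1 j).
rewrite !natrM natrB //= => eq_m1.
by rewrite [_ * (_ - _)]mulrC -eq_m1; field; natr_neq0.
Qed.

Lemma natr_binSr (m j : nat) :
  'C(m, j.+1)%:R = 'C(m, j)%:R * (m%:R - j%:R) / j.+1%:R :> R.
Proof.
have [le_jm|lt_mj] := leqP j m; last by rewrite !bin_small ?mul0r //; lia.
have := congr1 (GRing.natmul (1 : R)) (mul_bin_left m j).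
rewrite !natrM natrB // => eq_j1.
by rewrite [_ * (_ - _)]mulrC -eq_j1; field; natr_neq0.
Qed.

Lemma natr_binSS (m j : nat) :
  'C(m.+1, j.+1)%:R = 'C(m, j)%:R * m.+1%:R / j.+1%:R :> R.
Proof.
have := congr1 (GRing.natmul (1 : R)) (mul_bin_diag m.+1 j).
rewrite !natrM /= => eq_m1.
by rewrite [_ * m.+1%:R]mulrC eq_m1; field; natr_neq0.
Qed.

Lemma natr_bin_midS (k : nat) :
  'C((2 * k).+1, k)%:R = 'C(2 * k, k)%:R * (2 * k).+1%:R / k.+1%:R :> R.
Proof.
rewrite -bin_sub ?subSn; try lia.
by rewrite (_ : (2 * k - k = k)%N) ?natr_binSS //; lia.
Qed.

Lemma natr_bin_midSS (k : nat) :
  'C((2 * k).+2, k.+1)%:R = 'C(2 * k, k)%:R * (2 * (2 * k).+1)%:R / k.+1%:R :> R.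
Proof. by rewrite natr_binSS natr_bin_midS; field; natr_neq0. Qed.

End BinomialRatios.

Lemma sum_nat_widen0 (V : nmodType) (F : nat -> V) (m n : nat) :
  (m <= n)%N -> (forall k, (m <= k)%N -> F k = 0) ->
  \sum_(0 <= k < n) F k = \sum_(0 <= k < m) F k.
Proof.
move=> le_mn F0; rewrite (big_cat_nat (n := m)) //= [X in _ + X]big1_seq ?addr0 //.
by move=> k /=; rewrite mem_index_iota => /andP[/F0].
Qed.

Lemma sum_creative_telescope (V : zmodType) (L G : nat -> V) (K : nat) :
  L 0 = G 0 -> (forall k, (k < K)%N -> L k.+1 = G k.+1 - G k) ->
  \sum_(0 <= k < K.+1) L k = G K.
Proof.
move=> L0 LS; rewrite big_nat_recl // L0 (telescope_sumr_eq G) //.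
by rewrite addrC subrK.
Qed.

Lemma rec3_eq (R : idomainType) (c0 c1 c2 c3 u v : nat -> R) :
  (forall n, c3 n != 0) ->
  (forall n, c0 n * u n + c1 n * u n.+1 + c2 n * u n.+2 + c3 n * u n.+3 = 0) ->
  (forall n, c0 n * v n + c1 n * v n.+1 + c2 n * v n.+2 + c3 n * v n.+3 = 0) ->
  u 0 = v 0 -> u 1 = v 1 -> u 2 = v 2 -> u =1 v.
Proof.
move=> c3_neq0 rec_u rec_v u0 u1 u2.
suff agree n : [/\ u n = v n, u n.+1 = v n.+1 & u n.+2 = v n.+2].
  by move=> n; case: (agree n).
elim: n => [|n [e0 e1 e2]] //; split=> //.
move: (rec_u n); rewrite e0 e1 e2 -(rec_v n) => /addrI.
exact: mulfI.
Qed.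

Definition motzkin_term (m k : nat) : rat :=
  'C(m, 2 * k)%:R * (k.+1%:R)^-1 * 'C(2 * k, k)%:R.

Lemma motzkin_widen (m K : nat) : (m./2 < K)%N ->
  motzkin m = \sum_(0 <= k < K) motzkin_term m k.
Proof.
move=> lt_m2K; rewrite (@sum_nat_widen0 _ _ (m./2).+1) // => k lt_m2k.
by rewrite /motzkin_term bin_small ?mul0r // mul2n -ltn_half_double.
Qed.

(* Certificate of Zeilberger's algorithm for the summand motzkin_term. *)
Definition motzkin_cert (n j : nat) : rat :=
  - 2 * 'C(n.+1, (2 * j).+1)%:R * 'C((2 * j).+2, j.+1)%:R.

Definition motzkin_rec_term (n k : nat) : rat :=
  (n + 4)%:R * motzkin_term n.+2 k - (2 * n + 5)%:R * motzkin_term n.+1 k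
  - (3 * n.+1)%:R * motzkin_term n k.

Lemma motzkin_rec_term0 (n : nat) : motzkin_rec_term n 0 = motzkin_cert n 0.
Proof.
rewrite /motzkin_rec_term /motzkin_term /motzkin_cert !muln0 !bin0 bin1.
by have -> : 'C(2, 1) = 2%N by []; field.
Qed.

Lemma motzkin_rec_termS (n j : nat) :
  motzkin_rec_term n j.+1 = motzkin_cert n j.+1 - motzkin_cert n j.
Proof.
rewrite /motzkin_rec_term /motzkin_term /motzkin_cert (natr_bin_midSS j.+1).
have -> : (2 * j.+1 = (2 * j).+2)%N by lia.
rewrite natr_bin_midSS (natr_binSr n.+1 (2 * j).+2) (natr_bin_pred n).
rewrite (natr_binSr n.+1 (2 * j).+1) (natr_binSS n.+1).
by field; natr_neq0.
Qed.

Lemma motzkin_rec (n : nat) :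
  (n + 4)%:R * motzkin n.+2 = (2 * n + 5)%:R * motzkin n.+1 + (3 * n.+1)%:R * motzkin n.
Proof.
have widen m : (m <= n.+2)%N -> motzkin m = \sum_(0 <= k < n.+3) motzkin_term m k.
  by move=> le_m; apply: motzkin_widen; rewrite -divn2 ltn_divLR //; lia.
have : \sum_(0 <= k < n.+3) motzkin_rec_term n k = 0.
  rewrite (sum_creative_telescope (G := motzkin_cert n)) /motzkin_cert.
  - by rewrite bin_small ?mulr0 ?mul0r //; lia.
  - exact: motzkin_rec_term0.
  - by move=> k _; apply: motzkin_rec_termS.
rewrite !widen; try lia.
rewrite /motzkin_rec_term !sumrB -!mulr_sumr => /eqP.
by rewrite subr_eq add0r subr_eq addrC => /eqP.
Qed.

Lemma motzkinSS (n : nat) :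
  motzkin n.+2 = ((2 * n + 5)%:R * motzkin n.+1 + (3 * n.+1)%:R * motzkin n) / (n + 4)%:R.
Proof. by rewrite -motzkin_rec mulrC mulKf // pnatr_eq0 addn4. Qed.

Lemma motzkin0 : motzkin 0 = 1.
Proof. by rewrite /motzkin big_nat1 muln0 bin0 invr1 !mulr1. Qed.

Lemma motzkin1 : motzkin 1 = 1.
Proof. by rewrite /motzkin big_nat1 muln0 !bin0 invr1 !mulr1. Qed.

Definition motzkin_sqr_sum (m : nat) : rat :=
  ((6 * m.+1 * (m + 3) * (4 * m + 7))%:R * motzkin m * motzkin m.+1
   - (9 * m.+1 ^ 2 * (4 * m + 9))%:R * motzkin m ^+ 2
   - ((m + 3) ^ 2 * (4 * m + 5))%:R * motzkin m.+1 ^+ 2) / 4.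

Lemma motzkin_sqr_sumE (n : nat) :
  \sum_(1 <= k < n.+1) (2 * k + 1)%:R * motzkin k ^+ 2 = motzkin_sqr_sum n.
Proof.
elim: n => [|n IHn].
  by rewrite big_geq // /motzkin_sqr_sum motzkin0 motzkin1; field.
rewrite big_nat_recr //= IHn /motzkin_sqr_sum (motzkinSS n).
by field; natr_neq0.
Qed.

Definition binsum_coef (m k : nat) : rat :=
  ((4 * m + 3)%:R - (2 * k)%:R) * (m + k + 2)%:R
  * 'C(m + k + 1, 2 * k)%:R * 'C(2 * k, k)%:R * 'C(2 * k + 1, k)%:R.

Definition binsum_term (m k : nat) : rat := binsum_coef m k * (-3) ^+ (m + 1 - k).

Definition binsum (m : nat) : rat := \sum_(0 <= k < m.+2) binsum_term m k.

Lemma binsum_coef_small (m k : nat) : (m.+1 < k)%N -> binsum_coef m k = 0.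
Proof. by move=> lt_m1k; rewrite /binsum_coef bin_small ?(mulr0, mul0r) //; lia. Qed.

Lemma binsum_widen (m K : nat) : (m.+2 <= K)%N ->
  binsum m = \sum_(0 <= k < K) binsum_term m k.
Proof.
move=> le_m2K; rewrite (sum_nat_widen0 le_m2K) // => k lt_m1k.
by rewrite /binsum_term binsum_coef_small ?mul0r.
Qed.

(* The truncated exponent m + 1 - k is harmless: binsum_coef vanishes for k > m + 1. *)
Lemma binsum_term_shift (m k d N : nat) : (m + 1 + d = N)%N -> (k <= N)%N ->
  binsum_term m k = binsum_coef m k * (-3) ^+ (N - k) / (-3) ^+ d.
Proof.
move=> <- le_kN; rewrite /binsum_term.
have [le_km1|lt_m1k] := leqP k (m + 1); last by rewrite binsum_coef_small ?mul0r //; lia.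
by rewrite -(addnBAC d le_km1) exprD mulrA mulfK // expf_neq0.
Qed.

(* Recurrence and certificate of Zeilberger's algorithm for the summand binsum_term. *)
Definition rec_coef0 (n : nat) : rat :=
  (27 * (n + 2) * (n + 3) * (2 * n + 5) * (2 * n + 7) * (4 * n + 15))%:R.
Definition rec_coef1 (n : nat) : rat :=
  - (3 * (2 * n + 7) * (56 * n ^ 4 + 542 * n ^ 3 + 1907 * n ^ 2 + 2931 * n + 1692))%:R.
Definition rec_coef2 (n : nat) : rat :=
  - ((n + 3) * (2 * n + 3) * (56 * n ^ 3 + 590 * n ^ 2 + 2045 * n + 2304))%:R.
Definition rec_coef3 (n : nat) : rat :=
  ((n + 4) * (n + 5) * (2 * n + 3) * (2 * n + 5) * (4 * n + 11))%:R.

Definition binsum_cert (n j : nat) : rat :=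
  ((3 * (16 * n ^ 2 + 100 * n + 153) + 4 * (8 * n ^ 2 + 44 * n + 63) * j)%:R
   - (4 * (4 * n + 9) * j ^ 2)%:R)
  * ((2 * n + 3) * (2 * n + 5) * (2 * n + 7) ^ 2)%:R * 4 / 3
  * 'C(n + j + 3, 2 * j)%:R * 'C(2 * j, j)%:R * 'C(2 * j + 1, j)%:R * (-3) ^+ (n + 4 - j).

Definition binsum_rec_term (n k : nat) : rat :=
  rec_coef0 n * binsum_term n k + rec_coef1 n * binsum_term n.+1 k
  + rec_coef2 n * binsum_term n.+2 k + rec_coef3 n * binsum_term n.+3 k.

Lemma binsum_rec_term_shift (n k : nat) : (k <= n + 4)%N ->
  binsum_rec_term n k =
  (rec_coef0 n * binsum_coef n k / (-3) ^+ 3 + rec_coef1 n * binsum_coef n.+1 k / (-3) ^+ 2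
   + rec_coef2 n * binsum_coef n.+2 k / (-3) + rec_coef3 n * binsum_coef n.+3 k)
  * (-3) ^+ (n + 4 - k).
Proof.
move=> le_kn4; rewrite /binsum_rec_term (@binsum_term_shift n _ 3 (n + 4)) //; last lia.
rewrite (@binsum_term_shift n.+1 _ 2 (n + 4)) ?(@binsum_term_shift n.+2 _ 1 (n + 4))
  ?(@binsum_term_shift n.+3 _ 0 (n + 4)); try lia.
by field.
Qed.

Lemma binsum_rec_term0 (n : nat) : binsum_rec_term n 0 = binsum_cert n 0.
Proof.
rewrite binsum_rec_term_shift // /binsum_coef /binsum_cert !muln0 !bin0 !addn0.
by rewrite /rec_coef0 /rec_coef1 /rec_coef2 /rec_coef3; field.
Qed.

Lemma binsum_rec_termS (n j : nat) : (j <= n + 3)%N ->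
  binsum_rec_term n j.+1 = binsum_cert n j.+1 - binsum_cert n j.
Proof.
move=> le_jn3; rewrite binsum_rec_term_shift /binsum_coef /binsum_cert; last lia.
have -> : (n + 4 - j = (n + 4 - j.+1).+1)%N by lia.
rewrite (exprS _ (n + 4 - j.+1)) !(addn1 (2 * _)) natr_bin_midS.
have -> : (2 * j.+1 = (2 * j).+2)%N by lia.
(* Successor forms let the binomial ratio lemmas rewrite syntactically. *)
set p := (n + j.+1)%N.
have -> : (n + j.+1 + 1 = p.+1)%N by lia.
have -> : (n.+1 + j.+1 + 1 = p.+2)%N by lia.
have -> : (n.+2 + j.+1 + 1 = p.+3)%N by lia.
have -> : (n.+3 + j.+1 + 1 = p.+4)%N by lia.
have -> : (n + j.+1 + 3 = p.+3)%N by lia.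
have -> : (n + j + 3 = p.+2)%N by lia.
rewrite natr_bin_midSS natr_bin_midS.
rewrite (natr_bin_pred p.+1) (natr_bin_pred p.+2) (natr_bin_pred p.+3).
rewrite (natr_binSS p.+3) (natr_binSS p.+2).
rewrite {}/p /rec_coef0 /rec_coef1 /rec_coef2 /rec_coef3.
by field; natr_neq0.
Qed.

Lemma binsum_rec (n : nat) :
  rec_coef0 n * binsum n + rec_coef1 n * binsum n.+1
  + rec_coef2 n * binsum n.+2 + rec_coef3 n * binsum n.+3 = 0.
Proof.
rewrite !(@binsum_widen _ (n + 5)); try lia.
rewrite !mulr_sumr -!big_split /= (_ : (n + 5 = (n + 4).+1)%N); last lia.
rewrite (sum_creative_telescope (G := binsum_cert n)).
- by rewrite /binsum_cert bin_small ?(mulr0, mul0r) //; lia.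
- exact: binsum_rec_term0.
- by move=> k lt_kn4; apply: binsum_rec_termS; lia.
Qed.

Lemma motzkin_sqr_sum_rec (n : nat) :
  rec_coef0 n * ((n + 2)%:R * motzkin_sqr_sum n)
  + rec_coef1 n * ((n.+1 + 2)%:R * motzkin_sqr_sum n.+1)
  + rec_coef2 n * ((n.+2 + 2)%:R * motzkin_sqr_sum n.+2)
  + rec_coef3 n * ((n.+3 + 2)%:R * motzkin_sqr_sum n.+3) = 0.
Proof.
rewrite /motzkin_sqr_sum (motzkinSS n.+2) (motzkinSS n.+1) (motzkinSS n).
by rewrite /rec_coef0 /rec_coef1 /rec_coef2 /rec_coef3; field; natr_neq0.
Qed.

Lemma rec_coef3_neq0 (n : nat) : rec_coef3 n != 0.
Proof. by rewrite /rec_coef3 pnatr_eq0; lia. Qed.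

Lemma binsum_init (n : nat) : (n < 3)%N -> binsum n = (n + 2)%:R * motzkin_sqr_sum n.
Proof.
case: n => [|[|[|//]]] _; apply/eqP;
  by rewrite /binsum /motzkin_sqr_sum /motzkin unlock; vm_compute.
Qed.

Theorem lemma2p2 (n : nat) (hn : (0 < n)%N) :
  \sum_(1 <= k < n.+1) ((2 * k + 1)%:R * motzkin k ^+ 2 : rat)
  = \sum_(0 <= k < n.+2)
      (((4 * n + 3)%:R - (2 * k)%:R) * (n + k + 2)%:R / (n + 2)%:R
       * ('C(n + k + 1, 2 * k))%:R * ('C(2 * k, k))%:R * ('C(2 * k + 1, k))%:R
       * (-3) ^+ (n + 1 - k)).
Proof.
have closed_eq_binsum m : (m + 2)%:R * motzkin_sqr_sum m = binsum m.
  by apply: (rec3_eq rec_coef3_neq0 motzkin_sqr_sum_rec binsum_rec); rewrite binsum_init.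
have n2_neq0 : (n + 2)%:R != 0 :> rat by rewrite pnatr_eq0 addn2.
rewrite motzkin_sqr_sumE -[LHS](mulKf n2_neq0) closed_eq_binsum mulrC mulr_suml.
by apply: eq_bigr => k _; rewrite /binsum_term /binsum_coef; field; natr_neq0.
Qed.
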